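(* Let $t$ be a term and $\vec x=x_1\dots x_n$ a vector of pairwise distinct program variables. If for every $\vec v\in\mathbb{Z}^n$, $$\vec x(1)=\vec x(2)\wedge\vec x(3)=\vec v\ \vdash\ \mathrm{wp}\,[1:t,2:t,3:t]\,\{\vec x(2)=\vec v\Rightarrow\vec x(1)=\vec x(3)\},$$ then $$\vec x(1)=\vec x(2)\ \vdash\ \mathrm{wp}\,[1:t,\ 2:(t;t)]\,\{\vec x(1)=\vec x(2)\}.$$
   Context: Setting. $\mathrm{Val}=\mathbb{Z}$; $\mathrm{PVar}$ is a countably infinite set of program variables; a store is a function $s:\mathrm{PVar}\to\mathrm{Val}$; indices are $\mathrm{Idx}=\mathbb{N}$. Terms of a first-order imperative language are generated by $t ::= v \mid x \mid * \mid t\oplus t \mid \mathtt{skip}\mid x:=t \mid t;t \mid \mathtt{if}\ t\ \mathtt{then}\ t\ \mathtt{else}\ t \mid \mathtt{while}\ t\ \mathtt{do}\ t$, with a nondeterministic big-step semantics $t,s\Downarrow v,s'$ ($t$ run from $s$ may terminate with return value $v$ and final store $s'$; $t_1;t_2,s\Downarrow v,s''$ iff $t_1,s\Downarrow\_,s'$ and $t_2,s'\Downarrow \_,s''$ for some $s'$). A hyper-term is a finitely supported partial map from $\mathrm{Idx}$ to terms, written $[i_1:t_1,\dots,i_n:t_n]$; a hyper-store is a total function $\mathbf s:\mathrm{Idx}\to\mathrm{Store}$. $\mathbf t,\mathbf s\Downarrow\mathbf v,\mathbf s'$ holds iff for every $i\in\mathrm{supp}(\mathbf t)$, $\mathbf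 t(i),\mathbf s(i)\Downarrow\mathbf v(i),\mathbf s'(i)$, and for every $i\notin\mathrm{supp}(\mathbf t)$, $\mathbf s'(i)=\mathbf s(i)$. A hyper-assertion is a predicate on hyper-stores; connectives are pointwise; $P\vdash R$ means $\forall\mathbf s.\ P(\mathbf s)\Rightarrow R(\mathbf s)$. $\mathrm{wp}\,\mathbf t\,\{Q\}(\mathbf s):\iff\forall\mathbf v,\mathbf s'.\ (\mathbf t,\mathbf s\Downarrow\mathbf v,\mathbf s')\Rightarrow Q(\mathbf s')$ for a hyper-assertion $Q$. $\vec x(i)=\vec v$ is the hyper-assertion $\forall k.\ \mathbf s(i)(x_k)=v_k$, and $\vec x(i)=\vec x(j)$ is $\forall k.\ \mathbf s(i)(x_k)=\mathbf s(j)(x_k)$. *)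

From Stdlib Require Import ZArith List.
Import ListNotations.

Definition Val := Z.
Definition PVar := nat.
Definition Store := PVar -> Val.
Definition Idx := nat.

Definition upd (s : Store) (x : PVar) (v : Val) : Store :=
  fun y => if Nat.eqb y x then v else s y.

Inductive term : Type :=
| TVal : Val -> term
| TVar : PVar -> term
| TStar : term
| TOp : (Val -> Val -> Val) -> term -> term -> term
| TSkip : term
| TAssign : PVar -> term -> term
| TSeq : term -> term -> term
| TIf : term -> term -> term -> term
| TWhile : term -> term -> term.

(* t, s ⇓ v, s'   (conditions: nonzero = true) *)
Inductive eval : term -> Store -> Val -> Store -> Prop :=
| EVal : forall v s, eval (TVal v) s v s
| EVar : forall x s, eval (TVar x) s (s x) s
| EStar : forall v s, eval TStar s v s
| EOp : forall f t1 t2 s s1 s2 v1 v2,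
    eval t1 s v1 s1 -> eval t2 s1 v2 s2 -> eval (TOp f t1 t2) s (f v1 v2) s2
| ESkip : forall s, eval TSkip s 0%Z s
| EAssign : forall x t s v s',
    eval t s v s' -> eval (TAssign x t) s v (upd s' x v)
| ESeq : forall t1 t2 s s' s'' v1 v2,
    eval t1 s v1 s' -> eval t2 s' v2 s'' -> eval (TSeq t1 t2) s v2 s''
| EIfT : forall c t1 t2 s s1 s2 b v,
    eval c s b s1 -> b <> 0%Z -> eval t1 s1 v s2 -> eval (TIf c t1 t2) s v s2
| EIfF : forall c t1 t2 s s1 s2 v,
    eval c s 0%Z s1 -> eval t2 s1 v s2 -> eval (TIf c t1 t2) s v s2
| EWhileF : forall c t s s1,
    eval c s 0%Z s1 -> eval (TWhile c t) s 0%Z s1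
| EWhileT : forall c t s s1 s2 s3 b v w,
    eval c s b s1 -> b <> 0%Z -> eval t s1 v s2 ->
    eval (TWhile c t) s2 w s3 -> eval (TWhile c t) s w s3.

Definition hterm := Idx -> option term.
Definition HStore := Idx -> Store.
Definition HVal := Idx -> Val.

Fixpoint hterm_of (l : list (Idx * term)) : hterm :=
  fun i => match l with
           | [] => None
           | (j, t) :: l' => if Nat.eqb i j then Some t else hterm_of l' i
           end.

Definition heval (ht : hterm) (hs : HStore) (hv : HVal) (hs' : HStore) : Prop :=
  forall i, match ht i with
            | Some t => eval t (hs i) (hv i) (hs' i)
            | None => hs' i = hs i
            end.

Definition hassn := HStore -> Prop.

Definition entails (P R : hassn) : Prop := forall hs, P hs -> R hs.

Definition wp (ht : hterm) (Q : hassn) : hassn :=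
  fun hs => forall hv hs', heval ht hs hv hs' -> Q hs'.

Definition xs_eq_vals (xs : list PVar) (i : Idx) (vs : list Val) : hassn :=
  fun hs => Forall2 (fun x v => hs i x = v) xs vs.

Definition xs_eq_xs (xs : list PVar) (i j : Idx) : hassn :=
  fun hs => Forall (fun x => hs i x = hs j x) xs.

Definition hand (P Q : hassn) : hassn := fun hs => P hs /\ Q hs.
Definition himpl (P Q : hassn) : hassn := fun hs => P hs -> Q hs.

(* Split a run of [t; t] at its intermediate store [s]. Three copies of [t]
   started from the stores of copy 1, of copy 2 and from [s] realise the
   executions of copy 1, of the first [t] and of the second [t]. Taking
   [v := x(s)], the hypothesis' premise [x(2) = v] holds by construction,
   so its postcondition [x(1) = x(3)] compares copy 1 with the final store of
   [t; t]. *)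
From Stdlib Require Import ZArith List Lia.
Import ListNotations.

Definition hupd {A : Type} (f : Idx -> A) (i : Idx) (a : A) : Idx -> A :=
  fun j => if Nat.eqb j i then a else f j.

Lemma xs_eq_vals_map (xs : list PVar) (i : Idx) (hs : HStore) :
  xs_eq_vals xs i (map (hs i) xs) hs.
Proof. induction xs; simpl; constructor; auto. Qed.

Lemma eval_seq_inv (t1 t2 : term) (s : Store) (v : Val) (s'' : Store) :
  eval (TSeq t1 t2) s v s'' ->
  exists v1 s', eval t1 s v1 s' /\ eval t2 s' v s''.
Proof. intros Hrun; inversion Hrun; subst; eauto. Qed.

Lemma heval_hterm_of3 (t1 t2 t3 : term) (hs : HStore) (hv : HVal) (hs' : HStore) :
  eval t1 (hs 1) (hv 1) (hs' 1) ->
  eval t2 (hs 2) (hv 2) (hs' 2) ->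
  eval t3 (hs 3) (hv 3) (hs' 3) ->
  (forall i, ~ In i [1; 2; 3] -> hs' i = hs i) ->
  heval (hterm_of [(1, t1); (2, t2); (3, t3)]) hs hv hs'.
Proof.
  intros Hrun1 Hrun2 Hrun3 Hframe [|[|[|[|i]]]]; simpl; auto.
  - apply Hframe; simpl; intuition discriminate.
  - apply Hframe; simpl; intuition lia.
Qed.

Theorem mainTheorem18 (t : term) (xs : list PVar) (Hnd : NoDup xs) :
  (forall vs : list Val, length vs = length xs ->
     entails (hand (xs_eq_xs xs 1 2) (xs_eq_vals xs 3 vs))
             (wp (hterm_of [(1, t); (2, t); (3, t)])
                 (himpl (xs_eq_vals xs 2 vs) (xs_eq_xs xs 1 3)))) ->
  entails (xs_eq_xs xs 1 2)
          (wp (hterm_of [(1, t); (2, TSeq t t)]) (xs_eq_xs xs 1 2)).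
Proof.
  intros Hsplit hs Hpre hv hs' Hrun.
  assert (Hrun1 := Hrun 1); assert (Hrun2 := Hrun 2); simpl in Hrun1, Hrun2.
  destruct (eval_seq_inv _ _ _ _ _ Hrun2) as (vmid & smid & Hfirst & Hsecond).
  set (h := hupd hs 3 smid).
  set (h' := hupd (hupd (hupd hs 1 (hs' 1)) 2 smid) 3 (hs' 2)).
  set (hw := hupd (hupd hv 2 vmid) 3 (hv 2)).
  apply (Hsplit (map smid xs) (length_map _ _) h (conj Hpre (xs_eq_vals_map xs 3 h))
           hw h').
  - apply heval_hterm_of3; auto.
    intros [|[|[|[|i]]]] Hi; simpl in Hi; intuition.
  - apply (xs_eq_vals_map xs 2 h').
Qed.
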